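(* Let $(X,d)$ be a complete separable metric space without isolated points and let $f\colon X\to X$ be a continuous map. Then the following are equivalent: (1) for each $k\geq 2$, $\mathrm{Prox}_k(f)$ is dense in $X^k$; (2) there exist a sequence $\{p_n\}$ in $\mathbb{N}$ and a dense $\sigma$-Cantor subset $S$ of $X$ such that for any $x,y\in S$, $\lim_{n\to\infty} d(f^{p_n}(x),f^{p_n}(y))=0$.
   Context: For $k\geq 2$, $\mathrm{Prox}_k(f)=\{(x_1,\dots,x_k)\in X^k: \liminf_{n\to\infty}\max_{1\leq i<j\leq k} d(f^n(x_i),f^n(x_j))=0\}$. A $\sigma$-Cantor set is a countable union of sets each homeomorphic to the Cantor ternary set. *)

From Stdlib Require Import Reals.
Open Scope R_scope.

Definition is_metric {X : Type} (d : X -> X -> R) : Prop :=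
  (forall x y, 0 <= d x y) /\
  (forall x y, d x y = 0 <-> x = y) /\
  (forall x y, d x y = d y x) /\
  (forall x y z, d x z <= d x y + d y z).

Definition cauchy_seq {X : Type} (d : X -> X -> R) (u : nat -> X) : Prop :=
  forall eps, 0 < eps -> exists N, forall m n, (N <= m)%nat -> (N <= n)%nat -> d (u m) (u n) < eps.

Definition converges_to {X : Type} (d : X -> X -> R) (u : nat -> X) (l : X) : Prop :=
  forall eps, 0 < eps -> exists N, forall n, (N <= n)%nat -> d (u n) l < eps.

Definition complete_metric {X : Type} (d : X -> X -> R) : Prop :=
  forall u, cauchy_seq d u -> exists l, converges_to d u l.

Definition dense_in {X : Type} (d : X -> X -> R) (D : X -> Prop) : Prop :=
  forall x eps, 0 < eps -> exists y, D y /\ d x y < eps.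

Definition countable_set {X : Type} (D : X -> Prop) : Prop :=
  exists h : X -> nat, forall x y, D x -> D y -> h x = h y -> x = y.

Definition separable_metric {X : Type} (d : X -> X -> R) : Prop :=
  exists D : X -> Prop, countable_set D /\ dense_in d D.

Definition no_isolated_points {X : Type} (d : X -> X -> R) : Prop :=
  forall x eps, 0 < eps -> exists y, y <> x /\ d x y < eps.

Definition continuous_map {X Y : Type} (dX : X -> X -> R) (dY : Y -> Y -> R)
  (f : X -> Y) : Prop :=
  forall x eps, 0 < eps -> exists delta, 0 < delta /\
    forall y, dX x y < delta -> dY (f x) (f y) < eps.

Definition iter {X : Type} (n : nat) (f : X -> X) (x : X) : X := Nat.iter n f x.

(** Prox_k(f): a k-tuple is represented by t : nat -> X (only indices < k matter).
    liminf_n max_{i<j<k} d(f^n t_i, f^n t_j) = 0, written out (the quantity is >= 0):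
    for every eps > 0 and N there is n >= N with all pairwise distances < eps. *)
Definition Prox {X : Type} (d : X -> X -> R) (f : X -> X) (k : nat) (t : nat -> X) : Prop :=
  forall eps, 0 < eps -> forall N, exists n, (N <= n)%nat /\
    forall i j, (i < j)%nat -> (j < k)%nat -> d (iter n f (t i)) (iter n f (t j)) < eps.

(** Density in X^k with the product topology (max metric on k-tuples). *)
Definition dense_in_power {X : Type} (d : X -> X -> R) (k : nat) (P : (nat -> X) -> Prop) : Prop :=
  forall (y : nat -> X) eps, 0 < eps ->
    exists t, P t /\ forall i, (i < k)%nat -> d (t i) (y i) < eps.

Definition cantor_ternary (c : R) : Prop :=
  exists a : nat -> bool,
    infinite_sum (fun n => (if a n then 2 else 0) / 3 ^ (S n)) c.

Definition homeomorphic_to_cantor {X : Type} (d : X -> X -> R) (A : X -> Prop) : Prop :=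
  exists g : X -> R,
    (forall x, A x -> cantor_ternary (g x)) /\
    (forall x y, A x -> A y -> g x = g y -> x = y) /\
    (forall c, cantor_ternary c -> exists x, A x /\ g x = c) /\
    (forall x eps, A x -> 0 < eps -> exists delta, 0 < delta /\
       forall y, A y -> d x y < delta -> Rabs (g y - g x) < eps) /\
    (forall x eps, A x -> 0 < eps -> exists delta, 0 < delta /\
       forall y, A y -> Rabs (g y - g x) < delta -> d x y < eps).

(** sigma-Cantor set: a countable union of sets each homeomorphic to the
    Cantor ternary set (the family is indexed by a subset P of nat, so that
    the empty family is allowed). *)
Definition sigma_cantor {X : Type} (d : X -> X -> R) (S : X -> Prop) : Prop :=
  exists (C : nat -> X -> Prop) (P : nat -> Prop),
    (forall n, P n -> homeomorphic_to_cantor d (C n)) /\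
    (forall x, S x <-> exists n, P n /\ C n x).

From Stdlib Require Import Reals Lra Lia Classical ClassicalEpsilon FunctionalExtensionality.
From Stdlib Require Import Cantor.
Open Scope R_scope.

(* (1) => (2).  Fix a dense sequence [q] and grow countably many binary trees of nested closed
   balls, tree [j] rooted at a small ball about some [q m].  To pass from level [n] to level
   [n+1], density of [Prox_k] gives a proximal tuple with one entry in each of the [(n+2) 2^n]
   balls of the first [n+2] trees, and a time [p_n] at which all entries are close; by
   continuity of [f^(p_n)], small balls about the entries have [f^(p_n)]-images pairwise
   [2^-n]-close.  Each ball is then split into two far-apart smaller balls, which is possible
   as there are no isolated points.  By completeness the branches of tree [j] converge to the
   points of a Cantor set.  The union [S] of these Cantor sets is dense, and points of trees
   [j, j' <= n] lie in balls of level [n+1], so their [f^(p_n)]-images are [2^-n]-close.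
   (2) => (1).  Approximate a [k]-tuple by points of [S]: along [p_n] their pairwise distances
   tend to [0], so the tuple is close at some time for every scale.  This forces arbitrarily
   late close times, since a tuple close at an early time at a scale below all its positive
   diameters at early times has collapsed to a single orbit, and stays collapsed. *)

Lemma exists_pos_lower_bound (k : nat) (P : nat -> R -> Prop) :
  (forall i r r', P i r -> 0 < r' <= r -> P i r') ->
  (forall i, (i < k)%nat -> exists r, 0 < r /\ P i r) ->
  exists r, 0 < r /\ forall i, (i < k)%nat -> P i r.
Proof.
  intros Hdown. induction k as [|k IH]; intros Hk.
  - exists 1. split; [lra | intros; lia].
  - destruct IH as [r1 [Hr1 H1]]; [intros i Hi; apply Hk; lia|].
    destruct (Hk k) as [r2 [Hr2 H2]]; [lia|].
    assert (Hmin : 0 < Rmin r1 r2) by now apply Rmin_pos.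
    exists (Rmin r1 r2). split; [exact Hmin|].
    intros i Hi. destruct (Nat.eq_dec i k) as [->|Hne].
    + apply (Hdown k r2); [exact H2 | split; [exact Hmin | apply Rmin_r]].
    + apply (Hdown i r1); [apply H1; lia | split; [exact Hmin | apply Rmin_l]].
Qed.

Lemma eventually_forall_lt (k : nat) (P : nat -> nat -> Prop) :
  (forall i, (i < k)%nat -> exists N, forall n, (N <= n)%nat -> P i n) ->
  exists N, forall n, (N <= n)%nat -> forall i, (i < k)%nat -> P i n.
Proof.
  induction k as [|k IH]; intros Hk.
  - exists O. intros; lia.
  - destruct IH as [N1 H1]; [intros i Hi; apply Hk; lia|].
    destruct (Hk k) as [N2 H2]; [lia|].
    exists (max N1 N2). intros n Hn i Hi.
    destruct (Nat.eq_dec i k) as [->|Hne]; [apply H2 | apply H1]; lia.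
Qed.

Lemma arbitrarily_late_of_absorbing (P : nat -> R -> Prop) :
  (forall n e e', P n e -> e <= e' -> P n e') ->
  (forall n, (forall e, 0 < e -> P n e) -> forall e, 0 < e -> P (S n) e) ->
  (forall e, 0 < e -> exists n, P n e) ->
  forall e, 0 < e -> forall N, exists n, (N <= n)%nat /\ P n e.
Proof.
  intros Hmono Habsorb Hsome e He N.
  set (collapsed n := forall e, 0 < e -> P n e).
  assert (Hlater : forall n k, collapsed n -> collapsed (k + n)%nat).
  { intros n k Hn. induction k as [|k IH]; [exact Hn | exact (Habsorb _ IH)]. }
  (* Before time [N], a time that is not collapsed fails [P] at some fixed scale [delta]. *)
  destruct (exists_pos_lower_bound N (fun n delta => collapsed n \/ ~ P n delta))
    as [delta [Hdelta Hgap]].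
  { intros n r r' [Hc|Hr] [_ Hle]; [now left|].
    right. intros H. exact (Hr (Hmono _ _ _ H Hle)). }
  { intros n _. destruct (classic (collapsed n)) as [Hc|Hc].
    - exists 1. split; [lra | now left].
    - apply not_all_ex_not in Hc. destruct Hc as [e0 He0]. apply imply_to_and in He0.
      exists e0. split; [apply He0 | right; apply He0]. }
  destruct (Hsome (Rmin e delta)) as [n Hn]; [now apply Rmin_pos|].
  destruct (Compare_dec.le_lt_dec N n) as [HNn|HnN].
  - exists n. split; [exact HNn | exact (Hmono _ _ _ Hn (Rmin_l e delta))].
  - exists N. split; [lia|].
    destruct (Hgap n HnN) as [Hc|Hfar].
    + replace N with ((N - n) + n)%nat by lia. exact (Hlater n (N - n)%nat Hc e He).
    + exfalso. exact (Hfar (Hmono _ _ _ Hn (Rmin_r e delta))).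
Qed.

Lemma iterated_choice {A B : Type} (Inv : A -> Prop) (P : nat -> A -> B -> A -> Prop)
  (a0 : A) :
  Inv a0 -> (forall n a, Inv a -> exists b a', Inv a' /\ P n a b a') ->
  exists (s : nat -> A) (b : nat -> B),
    s O = a0 /\ forall n, Inv (s n) /\ P n (s n) (b n) (s (S n)).
Proof.
  intros H0 Hstep.
  destruct (Hstep O a0 H0) as [b0 [a1 _]].
  destruct (choice (fun (na : nat * A) (ba : B * A) =>
      Inv (snd na) -> Inv (snd ba) /\ P (fst na) (snd na) (fst ba) (snd ba))) as [F HF].
  { intros [n a]. destruct (classic (Inv a)) as [Ha|Ha].
    - destruct (Hstep n a Ha) as [b [a' H]]. now exists (b, a').
    - exists (b0, a1). intros; contradiction. }
  set (s := fix s n := match n with O => a0 | S n => snd (F (n, s n)) end).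
  assert (Hs : forall n, Inv (s n)).
  { induction n as [|n IH]; [exact H0 | exact (proj1 (HF (n, s n) IH))]. }
  exists s, (fun n => fst (F (n, s n))). split; [reflexivity|].
  intros n. exact (conj (Hs n) (proj2 (HF (n, s n) (Hs n)))).
Qed.

Lemma inv_pow_pos (x : R) (n : nat) : 0 < x -> 0 < / x ^ n.
Proof. intros Hx. apply Rinv_0_lt_compat, pow_lt, Hx. Qed.

Lemma inv_pow_le (x : R) (m n : nat) : 1 <= x -> (m <= n)%nat -> / x ^ n <= / x ^ m.
Proof.
  intros Hx Hmn. apply Rinv_le_contravar; [apply pow_lt; lra | now apply Rle_pow].
Qed.

Lemma exists_inv_pow_lt (x eps : R) : 1 < x -> 0 < eps -> exists m, / x ^ m < eps.
Proof.
  intros Hx Heps.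
  assert (Hinv : Rabs (/ x) < 1).
  { rewrite Rabs_pos_eq by (left; apply Rinv_0_lt_compat; lra).
    rewrite <- Rinv_1. apply Rinv_1_lt_contravar; lra. }
  destruct (pow_lt_1_zero (/ x) Hinv eps Heps) as [m Hm].
  exists m. specialize (Hm m (le_n m)).
  rewrite pow_inv, Rabs_pos_eq in Hm by (left; apply inv_pow_pos; lra). exact Hm.
Qed.

Lemma Un_cv_bounds (u : nat -> R) (l lo hi : R) (N : nat) :
  Un_cv u l -> (forall n, (N <= n)%nat -> lo <= u n <= hi) -> lo <= l <= hi.
Proof.
  intros Hu Hb.
  split; apply Rnot_lt_le; intros Hlt;
    [destruct (Hu (lo - l)) as [M HM] | destruct (Hu (l - hi)) as [M HM]]; try lra;
    specialize (HM (max N M) ltac:(lia)); specialize (Hb (max N M) ltac:(lia));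
    unfold Rdist in HM; apply Rabs_def2 in HM; lra.
Qed.

Definition agree_upto (m : nat) (a b : nat -> bool) : Prop :=
  forall i, (i < m)%nat -> a i = b i.

Lemma agree_upto_S m a b : agree_upto m a b -> a m = b m -> agree_upto (S m) a b.
Proof.
  intros H Hm i Hi. destruct (Nat.eq_dec i m) as [->|Hne]; [exact Hm | apply H; lia].
Qed.

Definition cantor_embedding {Y : Type} (dY : Y -> Y -> R) (phi : (nat -> bool) -> Y) : Prop :=
  (forall a eps, 0 < eps -> exists m, forall b, agree_upto m a b -> dY (phi a) (phi b) < eps) /\
  (forall a m, exists delta, 0 < delta /\
     forall b, dY (phi a) (phi b) < delta -> agree_upto m a b).

Lemma cantor_embedding_injective {Y : Type} (dY : Y -> Y -> R) (phi : (nat -> bool) -> Y) :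
  (forall y, dY y y = 0) -> cantor_embedding dY phi -> forall a b, phi a = phi b -> a = b.
Proof.
  intros Hrefl [_ Hsep] a b E. extensionality i.
  destruct (Hsep a (S i)) as [delta [Hdelta H]].
  apply H; [rewrite E, Hrefl; exact Hdelta | lia].
Qed.

Definition ternary_digit (a : nat -> bool) (n : nat) : R := (if a n then 2 else 0) / 3 ^ S n.

Fixpoint ternary_partial (a : nat -> bool) (m : nat) : R :=
  match m with O => 0 | S m => ternary_partial a m + ternary_digit a m end.

Lemma ternary_digit_bounds a n : 0 <= ternary_digit a n <= / 3 ^ n - / 3 ^ S n.
Proof.
  unfold ternary_digit. simpl pow. pose proof (pow_lt 3 n ltac:(lra)).
  assert (Hpos : 0 < / (3 * 3 ^ n)) by (apply Rinv_0_lt_compat; lra).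
  replace (/ 3 ^ n - / (3 * 3 ^ n)) with (2 * / (3 * 3 ^ n)) by (field; lra).
  unfold Rdiv. destruct (a n); lra.
Qed.

Lemma ternary_partial_gap a m k :
  0 <= ternary_partial a (m + k) - ternary_partial a m <= / 3 ^ m - / 3 ^ (m + k).
Proof.
  induction k as [|k IH].
  - rewrite Nat.add_0_r. lra.
  - rewrite Nat.add_succ_r. simpl ternary_partial.
    pose proof (ternary_digit_bounds a (m + k)). lra.
Qed.

Lemma ternary_partial_cauchy a : Cauchy_crit (ternary_partial a).
Proof.
  intros eps Heps. destruct (exists_inv_pow_lt 3 eps) as [N HN]; [lra | exact Heps |].
  exists N. intros m k Hm Hk. unfold Rdist.
  destruct (ternary_partial_gap a N (m - N)) as [Hm1 Hm2].
  destruct (ternary_partial_gap a N (k - N)) as [Hk1 Hk2].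
  replace (N + (m - N))%nat with m in * by lia.
  replace (N + (k - N))%nat with k in * by lia.
  pose proof (inv_pow_pos 3 m ltac:(lra)). pose proof (inv_pow_pos 3 k ltac:(lra)).
  apply Rabs_def1; lra.
Qed.

Definition ternary_value (a : nat -> bool) : R :=
  proj1_sig (R_complete _ (ternary_partial_cauchy a)).

Lemma ternary_value_cv a : Un_cv (ternary_partial a) (ternary_value a).
Proof. exact (proj2_sig (R_complete _ (ternary_partial_cauchy a))). Qed.

Lemma ternary_value_bounds a m :
  ternary_partial a m <= ternary_value a <= ternary_partial a m + / 3 ^ m.
Proof.
  apply (Un_cv_bounds _ _ _ _ m (ternary_value_cv a)). intros n Hn.
  destruct (ternary_partial_gap a m (n - m)) as [H1 H2].
  replace (m + (n - m))%nat with n in * by lia.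
  pose proof (inv_pow_pos 3 n ltac:(lra)). lra.
Qed.

Lemma ternary_partial_agree a b m :
  agree_upto m a b -> ternary_partial a m = ternary_partial b m.
Proof.
  induction m as [|m IH]; intros H; [reflexivity|].
  simpl. unfold ternary_digit. rewrite (H m) by lia.
  rewrite IH; [reflexivity | intros i Hi; apply H; lia].
Qed.

Lemma ternary_value_sum a : infinite_sum (ternary_digit a) (ternary_value a).
Proof.
  assert (Hsum : forall n, sum_f_R0 (ternary_digit a) n = ternary_partial a (S n)).
  { induction n as [|n IH]; [symmetry; apply Rplus_0_l | simpl in *; now rewrite IH]. }
  intros eps Heps. destruct (ternary_value_cv a eps Heps) as [N HN].
  exists N. intros n Hn. rewrite Hsum. apply HN. lia.
Qed.

Lemma ternary_value_cantor a : cantor_ternary (ternary_value a).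
Proof. exists a. exact (ternary_value_sum a). Qed.

Lemma cantor_ternary_value c : cantor_ternary c -> exists a, c = ternary_value a.
Proof.
  intros [a Ha]. exists a.
  exact (uniqueness_sum (ternary_digit a) _ _ Ha (ternary_value_sum a)).
Qed.

Lemma ternary_value_embedding : cantor_embedding Rdist ternary_value.
Proof.
  split.
  - intros a eps Heps. destruct (exists_inv_pow_lt 3 eps) as [m Hm]; [lra | exact Heps |].
    exists m. intros b Hab. unfold Rdist.
    pose proof (ternary_partial_agree a b m Hab).
    pose proof (ternary_value_bounds a m). pose proof (ternary_value_bounds b m).
    apply Rabs_def1; lra.
  - intros a m. exists (/ 3 ^ m). split; [apply inv_pow_pos; lra|].
    induction m as [|m IH]; intros b Hab; [intros i Hi; lia|].
    pose proof (inv_pow_le 3 m (S m) ltac:(lra) ltac:(lia)).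
    assert (Hagree : agree_upto m a b) by (apply IH; lra).
    apply agree_upto_S; [exact Hagree|].
    pose proof (ternary_partial_agree a b m Hagree).
    (* A differing digit [m] moves the value by at least [3^-(m+1)]. *)
    pose proof (ternary_value_bounds a (S m)). pose proof (ternary_value_bounds b (S m)).
    unfold Rdist in Hab. apply Rabs_def2 in Hab.
    simpl ternary_partial in *. unfold ternary_digit in *. simpl pow in *.
    pose proof (pow_lt 3 m ltac:(lra)).
    assert (E : / (3 * 3 ^ m) = / 3 * / 3 ^ m) by (field; lra).
    unfold Rdiv in *. rewrite E in *.
    destruct (a m), (b m); auto; exfalso; nra.
Qed.

(* Binary words are coded by naturals: the children of node [w] are [2 w] and [2 w + 1]
   and the parent of [v] is [Nat.div2 v]; [prefix_code a n] is the node at level [n]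
   on the branch [a]. *)
Fixpoint prefix_code (a : nat -> bool) (n : nat) : nat :=
  match n with
  | O => O
  | S n => if a n then S (2 * prefix_code a n) else (2 * prefix_code a n)%nat
  end.

Lemma prefix_code_div2 a n : Nat.div2 (prefix_code a (S n)) = prefix_code a n.
Proof. simpl. destruct (a n); [apply Nat.div2_succ_double | apply Nat.div2_double]. Qed.

Lemma prefix_code_lt a n : (prefix_code a n < 2 ^ n)%nat.
Proof. induction n as [|n IH]; simpl; [lia|]. destruct (a n); lia. Qed.

Lemma prefix_code_agree a b n : agree_upto n a b -> prefix_code a n = prefix_code b n.
Proof.
  induction n as [|n IH]; intros H; [reflexivity|].
  simpl. rewrite (H n) by lia. rewrite IH; [reflexivity | intros i Hi; apply H; lia].
Qed.

Section Metric.

Variables (X : Type) (d : X -> X -> R).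
Hypothesis Hmetric : is_metric d.

Lemma dist_nonneg x y : 0 <= d x y.
Proof. exact (proj1 Hmetric x y). Qed.

Lemma dist_refl x : d x x = 0.
Proof. now apply (proj1 (proj2 Hmetric)). Qed.

Lemma dist_eq0 x y : d x y = 0 -> x = y.
Proof. apply (proj1 (proj2 Hmetric)). Qed.

Lemma dist_sym x y : d x y = d y x.
Proof. exact (proj1 (proj2 (proj2 Hmetric)) x y). Qed.

Lemma dist_triangle x y z : d x z <= d x y + d y z.
Proof. exact (proj2 (proj2 (proj2 Hmetric)) x y z). Qed.

(* Triangle-inequality certificate that the closed ball [B(x', r')] lies in [B(x, r)]. *)
Definition subball (x' : X) (r' : R) (x : X) (r : R) : Prop := d x' x + r' <= r.

Lemma subball_refl x r : subball x r x r.
Proof. unfold subball. rewrite dist_refl. lra. Qed.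

Lemma subball_trans {x'' r'' x' r' x r} :
  subball x'' r'' x' r' -> subball x' r' x r -> subball x'' r'' x r.
Proof. unfold subball. pose proof (dist_triangle x'' x' x). lra. Qed.

Lemma subball_radius_le {x' r' x r} : subball x' r' x r -> r' <= r.
Proof. unfold subball. pose proof (dist_nonneg x' x). lra. Qed.

Lemma subball_mem {x' r' x r y} : subball x' r' x r -> d x' y <= r' -> d x y <= r.
Proof.
  unfold subball. pose proof (dist_triangle x x' y). rewrite (dist_sym x x') in *. lra.
Qed.

Lemma image_homeomorphic_to_cantor (phi : (nat -> bool) -> X) :
  cantor_embedding d phi -> homeomorphic_to_cantor d (fun x => exists a, x = phi a).
Proof.
  intros Hphi.
  pose proof (cantor_embedding_injective d phi dist_refl Hphi) as Hinj.
  assert (Hval_inj : forall a b, ternary_value a = ternary_value b -> a = b).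
  { apply (cantor_embedding_injective Rdist).
    - apply R_dist_eq.
    - exact ternary_value_embedding. }
  set (code x := epsilon (inhabits (fun _ : nat => false)) (fun a => x = phi a)).
  assert (Hcode : forall a, code (phi a) = a).
  { intros a. apply Hinj. symmetry.
    apply (epsilon_spec _ (fun b => phi a = phi b)). now exists a. }
  exists (fun x => ternary_value (code x)). repeat split.
  - intros x _. apply ternary_value_cantor.
  - intros x y [a ->] [b ->]. rewrite !Hcode. now intros ->%Hval_inj.
  - intros c Hc. destruct (cantor_ternary_value c Hc) as [a ->].
    exists (phi a). split; [now exists a | now rewrite Hcode].
  - intros x eps [a ->] Heps.
    destruct (proj1 ternary_value_embedding a eps Heps) as [m Hm].
    destruct (proj2 Hphi a m) as [delta [Hdelta Hd]].
    exists delta. split; [exact Hdelta|]. intros y [b ->] Hab.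
    rewrite !Hcode, Rabs_minus_sym. exact (Hm b (Hd b Hab)).
  - intros x eps [a ->] Heps.
    destruct (proj1 Hphi a eps Heps) as [m Hm].
    destruct (proj2 ternary_value_embedding a m) as [delta [Hdelta Hd]].
    exists delta. split; [exact Hdelta|]. intros y [b ->] Hab.
    rewrite !Hcode, Rabs_minus_sym in Hab. exact (Hm b (Hd b Hab)).
Qed.

Lemma dense_sequence_of_separable (x0 : X) :
  separable_metric d ->
  exists q : nat -> X, forall x eps, 0 < eps -> exists m, d x (q m) < eps.
Proof.
  intros [D [[h Hh] HD]].
  exists (fun m => epsilon (inhabits x0) (fun y => D y /\ h y = m)).
  intros x eps Heps. destruct (HD x eps Heps) as [y [Hy Hxy]]. exists (h y).
  assert (Hspec : D (epsilon (inhabits x0) (fun z => D z /\ h z = h y)) /\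
                  h (epsilon (inhabits x0) (fun z => D z /\ h z = h y)) = h y)
    by (apply epsilon_spec; now exists y).
  rewrite (Hh _ y (proj1 Hspec) Hy (proj2 Hspec)). exact Hxy.
Qed.

(* Level [n+1] of a tree of closed balls from level [n], nodes coded as in [prefix_code].  The
   factor [2] in [splits_apart] puts points of sibling balls further apart than either radius. *)
Record splits (c : nat -> X) (r : nat -> R) (c' : nat -> X) (r' : nat -> R) : Prop := {
  splits_pos : forall v, 0 < r' v;
  splits_nested : forall v, subball (c' v) (r' v) (c (Nat.div2 v)) (r (Nat.div2 v));
  splits_half : forall v, r' v <= r (Nat.div2 v) / 2;
  splits_apart : forall w,
    2 * r' (2 * w)%nat + 2 * r' (S (2 * w)) < d (c' (2 * w)%nat) (c' (S (2 * w)))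
}.

Record cantor_scheme (c : nat -> nat -> X) (r : nat -> nat -> R) : Prop := {
  scheme_root : forall w, 0 < r O w <= 1;
  scheme_splits : forall n, splits (c n) (r n) (c (S n)) (r (S n))
}.

Arguments splits_pos {c r c' r'}.
Arguments splits_nested {c r c' r'}.
Arguments splits_half {c r c' r'}.
Arguments splits_apart {c r c' r'}.
Arguments scheme_root {c r}.
Arguments scheme_splits {c r}.

Lemma splits_children_apart {c r c' r'} (Hs : splits c r c' r') w x y :
  d (c' (2 * w)%nat) x <= r' (2 * w)%nat -> d (c' (S (2 * w))) y <= r' (S (2 * w)) ->
  r' (2 * w)%nat + r' (S (2 * w)) < d x y.
Proof.
  intros Hx Hy. pose proof (splits_apart Hs w).
  pose proof (dist_triangle (c' (2 * w)%nat) x (c' (S (2 * w)))).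
  pose proof (dist_triangle x y (c' (S (2 * w)))). rewrite (dist_sym y) in *. lra.
Qed.

Section Scheme.

Hypothesis Hcomplete : complete_metric d.
Variables (c : nat -> nat -> X) (r : nat -> nat -> R).
Hypothesis Hscheme : cantor_scheme c r.

Lemma scheme_radius_pos n w : 0 < r n w.
Proof.
  destruct n as [|n].
  - apply (scheme_root Hscheme).
  - apply (splits_pos (scheme_splits Hscheme n)).
Qed.

Lemma scheme_radius_le n w : r n w <= / 2 ^ n.
Proof.
  revert w. induction n as [|n IH]; intros w.
  - rewrite pow_O, Rinv_1. apply (scheme_root Hscheme).
  - pose proof (splits_half (scheme_splits Hscheme n) w). pose proof (IH (Nat.div2 w)).
    simpl pow. rewrite Rinv_mult. lra.
Qed.

Lemma scheme_nested a n k :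
  subball (c (n + k)%nat (prefix_code a (n + k))) (r (n + k)%nat (prefix_code a (n + k)))
          (c n (prefix_code a n)) (r n (prefix_code a n)).
Proof.
  induction k as [|k IH].
  - rewrite Nat.add_0_r. apply subball_refl.
  - rewrite Nat.add_succ_r. eapply subball_trans; [|exact IH].
    rewrite <- (prefix_code_div2 a (n + k)).
    apply (splits_nested (scheme_splits Hscheme (n + k))).
Qed.

Lemma scheme_cauchy a : cauchy_seq d (fun n => c n (prefix_code a n)).
Proof.
  intros eps Heps. destruct (exists_inv_pow_lt 2 (eps / 2)) as [N HN]; [lra | lra |].
  exists N. intros m k Hm Hk.
  pose proof (scheme_nested a N (m - N)) as Hsm. pose proof (scheme_nested a N (k - N)) as Hsk.
  replace (N + (m - N))%nat with m in Hsm by lia.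
  replace (N + (k - N))%nat with k in Hsk by lia.
  unfold subball in *.
  pose proof (scheme_radius_pos m (prefix_code a m)).
  pose proof (scheme_radius_pos k (prefix_code a k)).
  pose proof (scheme_radius_le N (prefix_code a N)).
  pose proof (dist_triangle (c m (prefix_code a m)) (c N (prefix_code a N))
                (c k (prefix_code a k))).
  rewrite (dist_sym (c N _)) in *. lra.
Qed.

Definition scheme_point (a : nat -> bool) : X :=
  epsilon (inhabits (c O O)) (converges_to d (fun n => c n (prefix_code a n))).

Lemma scheme_point_cv a : converges_to d (fun n => c n (prefix_code a n)) (scheme_point a).
Proof. unfold scheme_point. apply epsilon_spec, Hcomplete, scheme_cauchy. Qed.

Lemma scheme_point_in_ball a n :
  d (c n (prefix_code a n)) (scheme_point a) <= r n (prefix_code a n).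
Proof.
  apply Rnot_lt_le. intros Hlt.
  destruct (scheme_point_cv a _ (proj2 (Rlt_0_minus _ _) Hlt)) as [N HN].
  specialize (HN (n + N)%nat ltac:(lia)). simpl in HN.
  pose proof (scheme_nested a n N) as Hsub. unfold subball in Hsub.
  pose proof (scheme_radius_pos (n + N) (prefix_code a (n + N))).
  pose proof (dist_triangle (c n (prefix_code a n)) (c (n + N)%nat (prefix_code a (n + N)))
                (scheme_point a)).
  rewrite (dist_sym (c (n + N)%nat _) (c n _)) in Hsub. lra.
Qed.

Lemma scheme_point_close a b m :
  agree_upto m a b -> d (scheme_point a) (scheme_point b) <= 2 * / 2 ^ m.
Proof.
  intros Hab. pose proof (scheme_point_in_ball a m). pose proof (scheme_point_in_ball b m).
  rewrite <- (prefix_code_agree a b m Hab) in *.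
  pose proof (scheme_radius_le m (prefix_code a m)).
  pose proof (dist_triangle (scheme_point a) (c m (prefix_code a m)) (scheme_point b)) as Htri.
  rewrite (dist_sym (scheme_point a) (c m _)) in Htri. lra.
Qed.

(* If [a] and [b] first differ at digit [m], their points lie in sibling balls of level [m+1]. *)
Lemma scheme_point_apart a b m :
  d (scheme_point a) (scheme_point b) < r m (prefix_code a m) -> agree_upto m a b.
Proof.
  induction m as [|m IH]; intros Hab; [intros i Hi; lia|].
  pose proof (splits_nested (scheme_splits Hscheme m) (prefix_code a (S m))) as Hsub.
  rewrite prefix_code_div2 in Hsub. apply subball_radius_le in Hsub.
  assert (Hagree : agree_upto m a b) by (apply IH; lra).
  apply agree_upto_S; [exact Hagree|].
  pose proof (prefix_code_agree a b m Hagree) as Hw.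
  pose proof (scheme_point_in_ball a (S m)) as Ha.
  pose proof (scheme_point_in_ball b (S m)) as Hb.
  pose proof (scheme_radius_pos (S m) (2 * prefix_code a m)).
  pose proof (scheme_radius_pos (S m) (S (2 * prefix_code a m))).
  pose proof (splits_children_apart (scheme_splits Hscheme m) (prefix_code a m)) as Hapart.
  pose proof (Hapart (scheme_point a) (scheme_point b)).
  pose proof (Hapart (scheme_point b) (scheme_point a)).
  rewrite (dist_sym (scheme_point b)) in *.
  assert (Hcode : forall e, prefix_code e (S m) =
            if e m then S (2 * prefix_code e m) else (2 * prefix_code e m)%nat) by reflexivity.
  rewrite !Hcode in Hab, Hsub, Ha, Hb. rewrite <- Hw in Hb.
  destruct (a m), (b m); auto; exfalso; lra.
Qed.

Lemma scheme_point_embedding : cantor_embedding d scheme_point.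
Proof.
  split.
  - intros a eps Heps. destruct (exists_inv_pow_lt 2 (eps / 2)) as [m Hm]; [lra | lra |].
    exists m. intros b Hab. pose proof (scheme_point_close a b m Hab). lra.
  - intros a m. exists (r m (prefix_code a m)).
    split; [apply scheme_radius_pos | intros b; apply scheme_point_apart].
Qed.

End Scheme.

Section Dynamics.

Variable f : X -> X.

Definition tuple_close_at (k : nat) (t : nat -> X) (n : nat) (eps : R) : Prop :=
  forall i j, (i < j)%nat -> (j < k)%nat -> d (iter n f (t i)) (iter n f (t j)) < eps.

Lemma Prox_of_close_at_some_time k t :
  (forall eps, 0 < eps -> exists n, tuple_close_at k t n eps) -> Prox d f k t.
Proof.
  intros Hsome eps Heps N.
  apply (arbitrarily_late_of_absorbing (tuple_close_at k t)); [| | exact Hsome | exact Heps].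
  - intros n e e' H Hle i j Hij Hjk. specialize (H i j Hij Hjk). lra.
  - intros n Hc e He i j Hij Hjk.
    assert (E : iter n f (t i) = iter n f (t j)).
    { apply dist_eq0, Rle_antisym; [|apply dist_nonneg].
      apply Rnot_lt_le. intros Hpos. specialize (Hc _ Hpos i j Hij Hjk). lra. }
    change (d (f (iter n f (t i))) (f (iter n f (t j))) < e). rewrite E, dist_refl. exact He.
Qed.

Lemma dense_Prox_of_synchronizing_set (p : nat -> nat) (S : X -> Prop) :
  dense_in d S ->
  (forall x y, S x -> S y -> forall eps, 0 < eps -> exists N, forall n, (N <= n)%nat ->
     d (iter (p n) f x) (iter (p n) f y) < eps) ->
  forall k, dense_in_power d k (Prox d f k).
Proof.
  intros HS Hsync k y eps Heps.
  destruct (choice (fun i s => S s /\ d (y i) s < eps)) as [t Ht].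
  { intros i. exact (HS (y i) eps Heps). }
  exists t. split; [|intros i _; rewrite dist_sym; apply Ht].
  apply Prox_of_close_at_some_time. intros e He.
  destruct (eventually_forall_lt k (fun i n => forall j, (j < k)%nat ->
              d (iter (p n) f (t i)) (iter (p n) f (t j)) < e)) as [M HM].
  { intros i _. apply eventually_forall_lt. intros j _.
    apply Hsync; [apply Ht | apply Ht | exact He]. }
  exists (p M). intros i j Hij Hjk. apply (HM M (le_n M)); lia.
Qed.

Hypothesis Hf : continuous_map d d f.

Lemma iter_continuous n : continuous_map d d (iter n f).
Proof.
  induction n as [|n IH]; intros x eps Heps.
  - exists eps. split; [exact Heps | intros y Hy; exact Hy].
  - destruct (Hf (iter n f x) eps Heps) as [delta1 [Hdelta1 H1]].
    destruct (IH x delta1 Hdelta1) as [delta2 [Hdelta2 H2]].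
    exists delta2. split; [exact Hdelta2 | intros y Hy; exact (H1 _ (H2 _ Hy))].
Qed.

(* [c j w] and [r j w] are the center and radius of node [w] of tree [j] at some level. *)
Definition synchronized (J W p : nat) (c : nat -> nat -> X) (r : nat -> nat -> R) (eps : R) :
  Prop :=
  forall j j' w w' x y, (j <= J)%nat -> (j' <= J)%nat -> (w < W)%nat -> (w' < W)%nat ->
    d (c j w) x <= r j w -> d (c j' w') y <= r j' w' -> d (iter p f x) (iter p f y) < eps.

Lemma synchronize_balls (k : nat) (u : nat -> X) (rho : nat -> R) (eps : R) :
  dense_in_power d k (Prox d f k) -> (forall i, (i < k)%nat -> 0 < rho i) -> 0 < eps ->
  exists p (u' : nat -> X) s, 0 < s /\
    (forall i, (i < k)%nat -> subball (u' i) s (u i) (rho i)) /\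
    forall i i' x y, (i < k)%nat -> (i' < k)%nat -> d (u' i) x <= s -> d (u' i') y <= s ->
      d (iter p f x) (iter p f y) < eps.
Proof.
  intros Hdense Hrho Heps.
  destruct (exists_pos_lower_bound k (fun i r => r <= rho i)) as [rmin [Hrmin Hrmin_le]].
  { intros i r r' H [_ Hle]. lra. }
  { intros i Hi. exists (rho i). split; [exact (Hrho i Hi) | lra]. }
  destruct (Hdense u (rmin / 2)) as [t [Hprox Ht]]; [lra|].
  destruct (Hprox (eps / 3) ltac:(lra) O) as [p [_ Hp]].
  assert (Hclose : forall i i', (i < k)%nat -> (i' < k)%nat ->
                     d (iter p f (t i)) (iter p f (t i')) < eps / 3).
  { intros i i' Hi Hi'. destruct (Compare_dec.lt_eq_lt_dec i i') as [[Hlt| ->]|Hlt].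
    - now apply Hp.
    - rewrite dist_refl. lra.
    - rewrite dist_sym. now apply Hp. }
  destruct (exists_pos_lower_bound k (fun i sigma => forall x, d (t i) x < sigma ->
              d (iter p f (t i)) (iter p f x) < eps / 3)) as [sigma [Hsigma Hcont]].
  { intros i r r' H [_ Hle] x Hx. apply H. lra. }
  { intros i _. destruct (iter_continuous p (t i) (eps / 3)) as [sigma Hs]; [lra|].
    now exists sigma. }
  set (s := Rmin sigma (rmin / 2) / 2).
  assert (Hs : 0 < s < sigma /\ s <= rmin / 4).
  { pose proof (Rmin_pos sigma (rmin / 2) Hsigma ltac:(lra)).
    pose proof (Rmin_l sigma (rmin / 2)). pose proof (Rmin_r sigma (rmin / 2)). unfold s. lra. }
  exists p, t, s. split; [lra|]. split.
  - intros i Hi. unfold subball. pose proof (Ht i Hi). pose proof (Hrmin_le i Hi). lra.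
  - intros i i' x y Hi Hi' Hx Hy.
    pose proof (Hcont i Hi x ltac:(lra)). pose proof (Hcont i' Hi' y ltac:(lra)).
    pose proof (Hclose i i' Hi Hi').
    pose proof (dist_triangle (iter p f x) (iter p f (t i)) (iter p f y)) as Htri.
    pose proof (dist_triangle (iter p f (t i)) (iter p f (t i')) (iter p f y)).
    rewrite (dist_sym (iter p f x) (iter p f (t i))) in Htri. lra.
Qed.

Lemma synchronized_children J W p cm rm c' r' eps :
  (forall j, splits (cm j) (rm j) (c' j) (r' j)) ->
  synchronized J W p cm rm eps -> synchronized J (2 * W) p c' r' eps.
Proof.
  intros Hs Hsync j j' v v' x y Hj Hj' Hv Hv' Hx Hy.
  assert (Hparent : forall u, (u < 2 * W)%nat -> (Nat.div2 u < W)%nat).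
  { intros u Hu. pose proof (Nat.div2_odd u). destruct (Nat.odd u); simpl in *; lia. }
  apply (Hsync j j' (Nat.div2 v) (Nat.div2 v')); auto.
  - exact (subball_mem (splits_nested (Hs j) v) Hx).
  - exact (subball_mem (splits_nested (Hs j') v') Hy).
Qed.

Section Construction.

Hypothesis Hnoiso : no_isolated_points d.
Hypothesis Hprox : forall k, (2 <= k)%nat -> dense_in_power d k (Prox d f k).

(* The tree index [j] and the node [w] of the first [n+2] trees at level [n] are packed
   into the single index [j * 2^n + w] of a proximal tuple. *)
Lemma synchronize_level (n : nat) (c : nat -> nat -> X) (r : nat -> nat -> R) :
  (forall j w, 0 < r j w) ->
  exists p cm rm, (forall j w, 0 < rm j w /\ subball (cm j w) (rm j w) (c j w) (r j w)) /\
    synchronized (S n) (2 ^ n) p cm rm (/ 2 ^ n).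
Proof.
  intros Hr. set (K := (2 ^ n)%nat).
  assert (HK : K <> O) by (apply Nat.pow_nonzero; lia).
  assert (Hunpack : forall j w, (w < K)%nat ->
            ((j * K + w) / K = j /\ (j * K + w) mod K = w)%nat).
  { intros j w Hw. split.
    - rewrite Nat.div_add_l, Nat.div_small; lia.
    - rewrite Nat.add_comm, Nat.Div0.mod_add. now apply Nat.mod_small. }
  destruct (synchronize_balls (S (S n) * K) (fun i => c (i / K)%nat (i mod K))
              (fun i => r (i / K)%nat (i mod K)) (/ 2 ^ n)) as [p [u [s [Hs [Hsub Hsync]]]]].
  { apply Hprox. lia. }
  { intros i _. apply Hr. }
  { apply inv_pow_pos. lra. }
  set (inside j w := ((j <=? S n) && (w <? K))%bool).
  assert (Hinside : forall j w, (j <= S n)%nat -> (w < K)%nat -> inside j w = true).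
  { intros j w Hj Hw. unfold inside. apply andb_true_intro. now rewrite Nat.leb_le, Nat.ltb_lt. }
  exists p, (fun j w => if inside j w then u (j * K + w)%nat else c j w),
    (fun j w => if inside j w then s else r j w).
  split.
  - intros j w. destruct (inside j w) eqn:E; [|split; [apply Hr | apply subball_refl]].
    apply andb_prop in E. destruct E as [Hj%Nat.leb_le Hw%Nat.ltb_lt].
    destruct (Hunpack j w Hw) as [Ediv Emod]. split; [exact Hs|].
    specialize (Hsub (j * K + w)%nat ltac:(nia)). rewrite Ediv, Emod in Hsub. exact Hsub.
  - intros j j' w w' x y Hj Hj' Hw Hw'. rewrite !Hinside by assumption. apply Hsync; nia.
Qed.

Lemma split_ball (x : X) (rho : R) :
  0 < rho -> exists z s, 0 < s /\ s <= rho / 2 /\ subball x s x rho /\ subball z s x rho /\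
    4 * s < d x z.
Proof.
  intros Hrho. destruct (Hnoiso x (rho / 2)) as [z [Hzx Hz]]; [lra|].
  assert (Hpos : 0 < d x z).
  { destruct (dist_nonneg x z) as [H|H]; [exact H|].
    exfalso. apply Hzx. symmetry. now apply dist_eq0. }
  exists z, (d x z / 8). unfold subball. rewrite dist_refl, (dist_sym z). repeat split; lra.
Qed.

Lemma split_level (c : nat -> nat -> X) (r : nat -> nat -> R) :
  (forall j w, 0 < r j w) -> exists c' r', forall j, splits (c j) (r j) (c' j) (r' j).
Proof.
  intros Hr.
  destruct (choice (fun (jw : nat * nat) (zs : X * R) =>
      let (j, w) := jw in let (z, s) := zs in
      0 < s /\ s <= r j w / 2 /\ subball (c j w) s (c j w) (r j w) /\
      subball z s (c j w) (r j w) /\ 4 * s < d (c j w) z)) as [F HF].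
  { intros [j w]. destruct (split_ball (c j w) (r j w) (Hr j w)) as [z [s H]]. now exists (z, s). }
  exists (fun j v => if Nat.odd v then fst (F (j, Nat.div2 v)) else c j (Nat.div2 v)),
    (fun j v => snd (F (j, Nat.div2 v))).
  intros j. split.
  - intros v. specialize (HF (j, Nat.div2 v)). destruct (F (j, Nat.div2 v)). apply HF.
  - intros v. specialize (HF (j, Nat.div2 v)). destruct (F (j, Nat.div2 v)).
    destruct (Nat.odd v); apply HF.
  - intros v. specialize (HF (j, Nat.div2 v)). destruct (F (j, Nat.div2 v)). apply HF.
  - intros w. rewrite Nat.odd_succ, Nat.odd_even, Nat.even_even.
    rewrite Nat.div2_succ_double, Nat.div2_double.
    specialize (HF (j, w)). destruct (F (j, w)). simpl. lra.
Qed.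

Lemma splits_of_subball c r cm rm c' r' :
  (forall w, subball (cm w) (rm w) (c w) (r w)) -> splits cm rm c' r' -> splits c r c' r'.
Proof.
  intros Hsub Hs. split.
  - apply (splits_pos Hs).
  - intros v. eapply subball_trans; [apply (splits_nested Hs) | apply Hsub].
  - intros v. pose proof (splits_half Hs v).
    pose proof (subball_radius_le (Hsub (Nat.div2 v))). lra.
  - apply (splits_apart Hs).
Qed.

Lemma refine_level (n : nat) (c : nat -> nat -> X) (r : nat -> nat -> R) :
  (forall j w, 0 < r j w) ->
  exists p c' r', (forall j, splits (c j) (r j) (c' j) (r' j)) /\
    synchronized (S n) (2 ^ S n) p c' r' (/ 2 ^ n).
Proof.
  intros Hr.
  destruct (synchronize_level n c r Hr) as [p [cm [rm [Hm Hsync]]]].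
  destruct (split_level cm rm (fun j w => proj1 (Hm j w))) as [c' [r' Hs]].
  exists p, c', r'. split.
  - intros j. apply (splits_of_subball _ _ (cm j) (rm j)); [intros w; apply Hm | apply Hs].
  - exact (synchronized_children _ _ _ _ _ _ _ _ Hs Hsync).
Qed.

Lemma synchronized_family (c0 : nat -> nat -> X) (r0 : nat -> nat -> R) :
  (forall j w, 0 < r0 j w) ->
  exists (c : nat -> nat -> nat -> X) (r : nat -> nat -> nat -> R) (p : nat -> nat),
    c O = c0 /\ r O = r0 /\
    forall n, (forall j, splits (c n j) (r n j) (c (S n) j) (r (S n) j)) /\
      synchronized (S n) (2 ^ S n) (p n) (c (S n)) (r (S n)) (/ 2 ^ n).
Proof.
  intros Hr0.
  destruct (iterated_choice
    (fun cr : (nat -> nat -> X) * (nat -> nat -> R) => forall j w, 0 < snd cr j w)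
    (fun n cr p cr' => (forall j, splits (fst cr j) (snd cr j) (fst cr' j) (snd cr' j)) /\
       synchronized (S n) (2 ^ S n) p (fst cr') (snd cr') (/ 2 ^ n)) (c0, r0) Hr0)
    as [L [p [HL0 HL]]].
  { intros n [c r] Hr. destruct (refine_level n c r Hr) as [q [c' [r' [Hs Hsync]]]].
    exists q, (c', r'). split; [intros j; apply (splits_pos (Hs j)) | now split]. }
  exists (fun n => fst (L n)), (fun n => snd (L n)), p. rewrite HL0.
  split; [reflexivity | split; [reflexivity | intros n; apply HL]].
Qed.

Hypothesis Hcomplete : complete_metric d.

Lemma family_points_synchronized c r p :
  (forall j, cantor_scheme (fun n => c n j) (fun n => r n j)) ->
  (forall n, synchronized (S n) (2 ^ S n) (p n) (c (S n)) (r (S n)) (/ 2 ^ n)) ->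
  forall n j j' a b, (j <= n)%nat -> (j' <= n)%nat ->
    d (iter (p n) f (scheme_point (fun m => c m j) a))
      (iter (p n) f (scheme_point (fun m => c m j') b)) < / 2 ^ n.
Proof.
  intros Htree Hsync n j j' a b Hj Hj'.
  apply (Hsync n j j' (prefix_code a (S n)) (prefix_code b (S n))); try lia.
  - apply prefix_code_lt.
  - apply prefix_code_lt.
  - exact (scheme_point_in_ball Hcomplete _ _ (Htree j) a (S n)).
  - exact (scheme_point_in_ball Hcomplete _ _ (Htree j') b (S n)).
Qed.

Lemma scheme_points_dense (c : nat -> nat -> nat -> X) (r : nat -> nat -> nat -> R) :
  (forall j, cantor_scheme (fun n => c n j) (fun n => r n j)) ->
  (forall x eps, 0 < eps -> exists j, d x (c O j O) + r O j O < eps) ->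
  dense_in d (fun x => exists j a, x = scheme_point (fun n => c n j) a).
Proof.
  intros Htree Hroots x eps Heps. destruct (Hroots x eps Heps) as [j Hj].
  exists (scheme_point (fun n => c n j) (fun _ => false)).
  split; [now exists j, (fun _ => false)|].
  pose proof (scheme_point_in_ball Hcomplete _ _ (Htree j) (fun _ => false) O) as Hball.
  simpl in Hball.
  pose proof (dist_triangle x (c O j O) (scheme_point (fun n => c n j) (fun _ => false))). lra.
Qed.

Lemma synchronizing_sigma_cantor_of_dense_Prox :
  separable_metric d ->
  exists (p : nat -> nat) (S : X -> Prop),
    sigma_cantor d S /\ dense_in d S /\
    forall x y, S x -> S y -> forall eps, 0 < eps -> exists N, forall n, (N <= n)%nat ->
      d (iter (p n) f x) (iter (p n) f y) < eps.
Proof.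
  intros Hsep.
  destruct (classic (inhabited X)) as [[x0]|Hempty].
  2:{ exists (fun _ => O), (fun _ => False). split; [|split].
      - exists (fun _ _ => False), (fun _ => False). split; [tauto | firstorder].
      - intros x. exfalso. apply Hempty. now constructor.
      - tauto. }
  destruct (dense_sequence_of_separable x0 Hsep) as [q Hq].
  (* Tree [j] is rooted at the ball about [q m] of radius [2^-b], where [j] codes [(m, b)]. *)
  destruct (synchronized_family (fun j _ => q (fst (of_nat j)))
              (fun j _ => / 2 ^ snd (of_nat j))) as [c [r [p [Hc0 [Hr0 Hfam]]]]].
  { intros j _. apply inv_pow_pos. lra. }
  assert (Htree : forall j, cantor_scheme (fun n => c n j) (fun n => r n j)).
  { intros j. split; [intros w; rewrite Hr0 | intros n; apply Hfam].
    pose proof (inv_pow_le 2 O (snd (of_nat j)) ltac:(lra) ltac:(lia)).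
    simpl pow in *. rewrite Rinv_1 in *. split; [apply inv_pow_pos; lra | assumption]. }
  exists p, (fun x => exists j a, x = scheme_point (fun n => c n j) a). split; [|split].
  - exists (fun j x => exists a, x = scheme_point (fun n => c n j) a), (fun _ => True). split.
    + intros j _.
      apply image_homeomorphic_to_cantor, (scheme_point_embedding Hcomplete _ _ (Htree j)).
    + intros x. firstorder.
  - apply (scheme_points_dense c r Htree). intros x eps Heps.
    destruct (Hq x (eps / 2)) as [m Hm]; [lra|].
    destruct (exists_inv_pow_lt 2 (eps / 2)) as [b Hb]; [lra | lra |].
    exists (to_nat (m, b)). rewrite Hc0, Hr0. cbv beta. rewrite cancel_of_to. cbn [fst snd]. lra.
  - intros x y [j [a ->]] [j' [b ->]] eps Heps.
    destruct (exists_inv_pow_lt 2 eps) as [N HN]; [lra | exact Heps |].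
    exists (N + j + j')%nat. intros n Hn.
    pose proof (family_points_synchronized c r p Htree (fun n => proj2 (Hfam n)) n j j' a b
                  ltac:(lia) ltac:(lia)).
    pose proof (inv_pow_le 2 N n ltac:(lra) ltac:(lia)). lra.
Qed.

End Construction.

End Dynamics.

End Metric.

Theorem corollary2p4 (X : Type) (d : X -> X -> R)
  (Hmetric : is_metric d) (Hcomplete : complete_metric d)
  (Hsep : separable_metric d) (Hnoiso : no_isolated_points d)
  (f : X -> X) (Hf : continuous_map d d f) :
  (forall k, (2 <= k)%nat -> dense_in_power d k (Prox d f k))
  <->
  (exists (p : nat -> nat) (S : X -> Prop),
     sigma_cantor d S /\ dense_in d S /\
     forall x y, S x -> S y ->
       forall eps, 0 < eps -> exists N, forall n, (N <= n)%nat ->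
         d (iter (p n) f x) (iter (p n) f y) < eps).
Proof.
  split.
  - intros Hprox.
    exact (synchronizing_sigma_cantor_of_dense_Prox X d Hmetric f Hf Hnoiso Hprox Hcomplete Hsep).
  - intros (p & S & _ & Hdense & Hsync) k _.
    exact (dense_Prox_of_synchronizing_set X d Hmetric f p S Hdense Hsync k).
Qed.
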